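(* Let $q\ge2$, $n\ge1$, and ${\boldsymbol y}\in\Sigma_q^{n+1}$ with run length profile $(r_1,\dots,r_{\rho({\boldsymbol y})})$. Then $\mathsf{H}^{\mathsf{In}}_{1\text{-}\mathsf{Ins}}({\boldsymbol y})$ is invariant to permutations of the run length profile of ${\boldsymbol y}$ and $$\mathsf{H}^{\mathsf{In}}_{1\text{-}\mathsf{Ins}}({\boldsymbol y})=\log_2(n+1)-\frac{1}{n+1}\sum_{i=1}^{\rho({\boldsymbol y})}r_i\log_2 r_i.$$
   Context: $\Sigma_q=\{0,1,\dots,q-1\}$. For sequences ${\boldsymbol x}$ of length $\ell$ and ${\boldsymbol y}$ of length $N\ge\ell$, $\omega_{{\boldsymbol x}}({\boldsymbol y})$ is the number of index tuples $1\le i_1<\dots<i_\ell\le N$ with $y_{i_j}=x_j$. The $k$-insertion channel with input length $n$ maps ${\boldsymbol x}\in\Sigma_q^n$ to ${\boldsymbol y}\in\Sigma_q^{n+k}$ with probability $\omega_{{\boldsymbol x}}({\boldsymbol y})/(\binom{n+k}{k}q^k)$. Under uniform transmission $X$ is uniform on $\Sigma_q^n$ and $\mathsf{H}^{\mathsf{In}}_{k\text{-}\mathsf{Ins}}({\boldsymbol y})=H(X\mid Y={\boldsymbol y})$ (base-2 logarithms), with posterior $P({\boldsymbol x}\mid {\boldsymbol y})=\Pr\{{\boldsymbol y}\mid{\boldsymbol x}\}/\sum_{{\boldsymbol x}'}\Pr\{{\boldsymbol y}\mid{\boldsymbol x}'\}$. A run is a maximal block of identical consecutive symbols; $\rho({\boldsymbol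 y})$ is the number of runs and the run length profile is the vector of run lengths from left to right. Convention $0\log 0$ does not arise since $r_i\ge1$. *)

From HB Require Import structures.
From mathcomp Require Import all_boot all_order all_algebra.
From mathcomp Require Import all_classical all_reals all_analysis.

Set Implicit Arguments.
Unset Strict Implicit.
Unset Printing Implicit Defensive.

Import Order.TTheory GRing.Theory Num.Theory.
Local Open Scope ring_scope.

Section Defs.
Variable R : realType.

Definition log2 (x : R) : R := ln x / ln 2.

(* omega_x(y): number of index tuples i_1 < ... < i_l with y_{i_j} = x_j,
   i.e. number of masks m selecting the subsequence x from y *)
Definition omega (q : nat) (x y : seq 'I_q) : nat :=
  #|[pred m : (size y).-tuple bool | mask m y == x]|.

(* k-insertion channel transition probability Pr{ y | x } *)
Definition ins_prob (q k n : nat) (x : n.-tuple 'I_q) (y : (n + k).-tuple 'I_q) : R :=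
  (omega x y)%:R / ('C(n + k, k) * q ^ k)%:R.

(* posterior P(x | y) under uniform input *)
Definition posterior (q k n : nat) (y : (n + k).-tuple 'I_q) (x : n.-tuple 'I_q) : R :=
  ins_prob x y / \sum_(x' : n.-tuple 'I_q) ins_prob x' y.

Definition ent_term (p : R) : R := if p == 0 then 0 else - (p * log2 p).

(* H^In_{k-Ins}(y) = H(X | Y = y) *)
Definition H_ins (q k n : nat) (y : (n + k).-tuple 'I_q) : R :=
  \sum_(x : n.-tuple 'I_q) ent_term (posterior y x).

End Defs.

(* decomposition of a sequence into its runs (maximal blocks of equal symbols) *)
Fixpoint runs (T : eqType) (s : seq T) : seq (seq T) :=
  match s with
  | [::] => [::]
  | x :: s' =>
      match runs s' with
      | (y :: r) :: rs => if x == y then (x :: y :: r) :: rs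
                          else [:: x] :: (y :: r) :: rs
      | rs => [:: x] :: rs
      end
  end.

Definition rl_profile (T : eqType) (s : seq T) : seq nat := map size (runs s).

Definition nruns (T : eqType) (s : seq T) : nat := size (rl_profile s).

From HB Require Import structures.
From mathcomp Require Import all_boot all_order all_algebra.
From mathcomp Require Import all_classical all_reals all_analysis.
From mathcomp Require Import zify ring.

Set Implicit Arguments.
Unset Strict Implicit.
Unset Printing Implicit Defensive.

Import Order.TTheory GRing.Theory Num.Theory.

(* A mask keeping n of the n+1 symbols of y has a single hole, so omega_x(y)
   counts the positions of y whose deletion yields x; these counts sum to n+1,
   hence P(x | y) = omega_x(y) / (n+1).  Deleting positions i and j gives the
   same word iff i and j lie in the same run, so a deletion inside a run of
   length r is produced exactly r times.  Grouping the entropy sum by runs gives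
   sum_i r_i/(n+1) log2 ((n+1)/r_i), which only depends on the multiset of run
   lengths. *)

Section Runs.
Variable T : eqType.
Implicit Types (a b : T) (s t : seq T).

Lemma runs_cons a s : runs (a :: s) =
  if runs s is (b :: r) :: rs then
    if a == b then (a :: b :: r) :: rs else [:: a] :: (b :: r) :: rs
  else [:: a] :: runs s.
Proof. by rewrite /=; case: (runs s) => [|[|b r] rs]. Qed.

Lemma runs_consE a s : exists r rs, runs (a :: s) = (a :: r) :: rs.
Proof.
rewrite runs_cons; case: (runs s) => [|[|b r] rs]; first by exists [::], [::].
  by exists [::], ([::] :: rs).
by case: ifP => [/eqP <-|_]; [exists [:: a & r], rs | exists [::], ((b :: r) :: rs)].
Qed.

Lemma rl_profile_cons2 a b t : rl_profile [:: a, b & t] =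
  if a == b then incr_nth (rl_profile (b :: t)) 0 else 1 :: rl_profile (b :: t).
Proof.
have [r [rs E]] := runs_consE b t.
by rewrite /rl_profile runs_cons E; case: (a == b).
Qed.

Lemma sumn_rl_profile s : sumn (rl_profile s) = size s.
Proof.
elim: s => // a [|b t] // IH.
rewrite rl_profile_cons2; case: (a == b) => //=; last by rewrite IH.
by case: (rl_profile (b :: t)) IH => //= F rest <-.
Qed.

Lemma head_rl_profile_le s : head 0 (rl_profile s) <= size s.
Proof.
by rewrite -sumn_rl_profile; case: (rl_profile s) => //= F rest; rewrite leq_addr.
Qed.

End Runs.

Lemma map_iota0S (U : Type) (f : nat -> U) n :
  [seq f k | k <- iota 0 n.+1] = f 0 :: [seq f k.+1 | k <- iota 0 n].
Proof. by rewrite /= (iotaDl 1 0) -map_comp. Qed.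

Lemma map_iota_incr_prefix (f : nat -> nat) F N : F <= N ->
  [seq (k < F) + f k | k <- iota 0 N] =
  map succn (take F [seq f k | k <- iota 0 N]) ++ drop F [seq f k | k <- iota 0 N].
Proof.
move=> le_FN; rewrite -(subnKC le_FN) iotaD !map_cat.
rewrite take_size_cat ?drop_size_cat ?size_map ?size_iota // -map_comp.
congr (_ ++ _); apply/eq_in_map => k; rewrite mem_iota => /andP[le_k lt_k] /=.
  by rewrite lt_k.
by rewrite ltnNge le_k.
Qed.

Section RemNth.
Variable T : Type.
Implicit Types (a : T) (s : seq T).

Definition rem_nth (j : nat) s := take j s ++ drop j.+1 s.

Lemma rem_nth0 a s : rem_nth 0 (a :: s) = s.
Proof. by rewrite /rem_nth /= drop0. Qed.

Lemma rem_nthS j a s : rem_nth j.+1 (a :: s) = a :: rem_nth j s.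
Proof. by []. Qed.

Lemma size_rem_nth j s : j < size s -> size (rem_nth j s) = (size s).-1.
Proof. by move=> lt_js; rewrite size_cat size_take size_drop lt_js; lia. Qed.

End RemNth.

Definition hole_mask (n j : nat) : bitseq := nseq j true ++ false :: nseq (n - j.+1) true.

Lemma size_hole_mask n j : j < n -> size (hole_mask n j) = n.
Proof. by move=> lt_jn; rewrite size_cat /= !size_nseq; lia. Qed.

Lemma index_hole_mask n j : index false (hole_mask n j) = j.
Proof. by rewrite /hole_mask index_cat mem_nseq andbF /= size_nseq addn0. Qed.

Lemma mask_hole_mask (T : Type) (s : seq T) j :
  j < size s -> mask (hole_mask (size s) j) s = rem_nth j s.
Proof.
case: s => // x0 s0; set s := x0 :: s0 => lt_js.
rewrite /hole_mask /rem_nth -[X in mask _ X](cat_take_drop j s).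
rewrite mask_cat ?size_nseq ?size_take ?lt_js // mask_true ?size_take ?lt_js //.
by rewrite (drop_nth x0) // mask_cons /= mask_true // size_drop.
Qed.

Lemma hole_maskP (m : bitseq) :
  count_mem false m = 1 -> m = hole_mask (size m) (index false m).
Proof.
elim: m => // [[|]] m IH /=; first by move/IH => mE; rewrite {1}mE.
move=> [/count_memPn false_notin_m]; rewrite /hole_mask /= subSS subn0.
congr (_ :: _); apply/all_pred1P/allP => b; case: b => //; exact: contraTT.
Qed.

Section Deletions.
Variable T : eqType.
Implicit Types (a b : T) (s t : seq T).

Definition deletions s := [seq rem_nth j s | j <- iota 0 (size s)].

Definition deletion_mult s k := count_mem (rem_nth k s) (deletions s).

Lemma size_deletions s : size (deletions s) = size s.
Proof. by rewrite size_map size_iota. Qed.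

Lemma all_size_deletions n s : size s = n.+1 -> all (fun d => size d == n) (deletions s).
Proof.
move=> size_s; apply/allP => d /mapP[j]; rewrite mem_iota size_s => /andP[_ lt_j] ->.
by rewrite size_rem_nth size_s //= eqxx.
Qed.

Lemma deletions_cons a s : deletions (a :: s) = s :: map (cons a) (deletions s).
Proof. by rewrite /deletions map_iota0S rem_nth0 -map_comp. Qed.

Lemma count_deletions_cons a s c d :
  count_mem (c :: d) (deletions (a :: s)) =
  (s == c :: d) + (a == c) * count_mem d (deletions s).
Proof.
rewrite deletions_cons /= count_map; congr (_ + _).
have [<-|ne_ac] := eqVneq a c.
  by rewrite mul1n; apply: eq_count => x; rewrite /= eqseq_cons eqxx.
rewrite mul0n (eq_count (a2 := pred0)) ?count_pred0 // => x.
by rewrite /= eqseq_cons (negbTE ne_ac).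
Qed.

Lemma rem_nth_eq_rem_nth0 s k : k < size s ->
  (rem_nth k s == rem_nth 0 s) = (k < head 0 (rl_profile s)).
Proof.
elim: s k => // a [|b t] IH [|k] //= lt_k.
  by rewrite eqxx rl_profile_cons2 -nth0; case: (a == b); rewrite ?nth_incr_nth.
rewrite rem_nthS rem_nth0 eqseq_cons -[X in rem_nth _ _ == X](rem_nth0 b t) IH //.
by rewrite rl_profile_cons2; case: (a == b); rewrite //= -!nth0 nth_incr_nth.
Qed.

Lemma deletion_mult0 s : deletion_mult s 0 = head 0 (rl_profile s).
Proof.
rewrite /deletion_mult count_map.
rewrite (eq_in_count (a2 := fun k => k < head 0 (rl_profile s))); last first.
  by move=> k; rewrite mem_iota /= => lt_ks; rewrite rem_nth_eq_rem_nth0.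
by rewrite -size_filter (filter_iota_ltn 0 (head_rl_profile_le s)) size_iota.
Qed.

Lemma deletion_mult0_cons2 a b t :
  deletion_mult [:: a, b & t] 0 = 1 + (a == b) * head 0 (rl_profile (b :: t)).
Proof.
rewrite /deletion_mult rem_nth0 count_deletions_cons eqxx.
by rewrite -(deletion_mult0 (b :: t)) /deletion_mult rem_nth0.
Qed.

Lemma deletion_multS_cons2 a b t k : k < (size t).+1 ->
  deletion_mult [:: a, b & t] k.+1 =
  ((a == b) && (k < head 0 (rl_profile (b :: t)))) + deletion_mult (b :: t) k.
Proof.
move=> lt_k; rewrite /deletion_mult rem_nthS count_deletions_cons eqxx mul1n.
rewrite -(@rem_nth_eq_rem_nth0 (b :: t) k lt_k) rem_nth0 eqseq_cons.
by rewrite [b == a]eq_sym [t == _]eq_sym.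
Qed.

Lemma deletion_mult_runs s :
  [seq deletion_mult s k | k <- iota 0 (size s)] = flatten [seq nseq r r | r <- rl_profile s].
Proof.
elim: s => // a [|b t] IH; first by [].
have := head_rl_profile_le (b :: t).
case E: (rl_profile (b :: t)) IH => [|F rest] IH le_F.
  by move/(congr1 sumn): E; rewrite sumn_rl_profile.
rewrite (map_iota0S _ (size (b :: t))) deletion_mult0_cons2 E.
have multSE : {in iota 0 (size (b :: t)),
    (fun k => deletion_mult [:: a, b & t] k.+1) =1
    (fun k => ((a == b) && (k < F)) + deletion_mult (b :: t) k)}.
  by move=> k; rewrite mem_iota => /andP[_ lt_k]; rewrite deletion_multS_cons2 // E.
rewrite (iffLR (eq_in_map _ _ _) multSE) rl_profile_cons2 E.
case: (a == b); last by rewrite IH.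
rewrite (map_iota_incr_prefix (deletion_mult (b :: t)) le_F) IH /=.
by rewrite mul1n take_size_cat ?drop_size_cat ?size_nseq // map_nseq.
Qed.

Lemma big_deletion_counts (V : nmodType) s (h : nat -> V) :
  (\sum_(d <- deletions s) h (count_mem d (deletions s)) =
   \sum_(r <- rl_profile s) h r *+ r)%R.
Proof.
rewrite {1}/deletions big_map -(big_map (deletion_mult s) xpredT h) deletion_mult_runs.
by rewrite big_flatten big_map; apply: eq_bigr => r _; rewrite big_nseq iter_addr_0.
Qed.

End Deletions.

Lemma card_ord_count N (P : pred nat) : #|[pred j : 'I_N | P j]| = count P (iota 0 N).
Proof. by rewrite cardE /enum_mem -enumT size_filter -val_enum_ord count_map. Qed.

Lemma omega_deletions q (x y : seq 'I_q) :
  size y = (size x).+1 -> omega x y = count_mem x (deletions y).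
Proof.
move=> size_y; rewrite /omega /deletions count_map -card_ord_count.
pose hole (j : 'I_(size y)) : (size y).-tuple bool :=
  Tuple (introT eqP (size_hole_mask (ltn_ord j))).
have hole_inj : injective hole.
  by move=> i j /(congr1 (index false \o val)); rewrite /= !index_hole_mask => /val_inj.
rewrite -(fintype.card_image hole_inj); apply: eq_card => m /=.
apply/idP/fintype.imageP => [/eqP mE|[j /eqP jE ->]]; last first.
  by rewrite inE /= mask_hole_mask ?jE.
have one_false : count_mem false m = 1.
  have := count_predC id m; rewrite -(size_mask (m := m) (s := y)) ?size_tuple // mE.
  by rewrite (eq_count (a2 := pred1 false)) => [|[]] //; lia.
have lt_index : index false m < size y.
  by rewrite -[X in _ < X](size_tuple m) index_mem -has_pred1 has_count one_false.
set j := Ordinal lt_index.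
have mE' : m = hole j.
  by apply: val_inj; move: (hole_maskP one_false); rewrite size_tuple.
exists j => //.
by rewrite inE -mE [in mask _ _]mE' /= mask_hole_mask.
Qed.

Local Open Scope ring_scope.

Lemma sum_count_mem_tuple (R : pzSemiRingType) (T : finType) n (l : seq (seq T))
    (g : seq T -> R) :
  all (fun d => size d == n) l ->
  \sum_(x : n.-tuple T) (count_mem (x : seq T) l)%:R * g x = \sum_(d <- l) g d.
Proof.
elim: l => [_|d l IH /andP[/eqP size_d size_l]].
  by rewrite big_nil big1 // => x _; rewrite mul0r.
rewrite big_cons -IH //; under eq_bigr => x _ do rewrite /= natrD mulrDl.
rewrite big_split /=; congr (_ + _).
rewrite (bigD1 (Tuple (introT eqP size_d))) //= eqxx mul1r big1 ?addr0 // => x ne_x.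
by rewrite (_ : d == x = false) ?mul0r //; apply: contraNF ne_x => /eqP dx; apply/eqP/val_inj.
Qed.

Lemma posterior1E (R : realType) q n (y : (n + 1).-tuple 'I_q) (x : n.-tuple 'I_q) :
  (0 < q)%N -> posterior R y x = (count_mem (x : seq 'I_q) (deletions y))%:R / (n + 1)%:R.
Proof.
move=> q_gt0.
have omegaE (x' : n.-tuple 'I_q) : omega x' y = count_mem (x' : seq 'I_q) (deletions y).
  by rewrite omega_deletions // !size_tuple addn1.
have sum_counts :
    \sum_(x' : n.-tuple 'I_q) (count_mem (x' : seq 'I_q) (deletions y))%:R = (n + 1)%:R :> R.
  under eq_bigr do rewrite -[_%:R]mulr1.
  rewrite (sum_count_mem_tuple (fun=> 1)); last first.
    by apply: all_size_deletions; rewrite size_tuple addn1.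
  by rewrite big_const_seq count_predT iter_addr_0 size_deletions size_tuple.
have denom_neq0 : ('C(n + 1, 1) * q ^ 1)%:R != 0 :> R.
  by rewrite pnatr_eq0 muln_eq0 bin1 expn1 addn1 negb_or /= -lt0n.
rewrite /posterior /ins_prob -mulr_suml.
under eq_bigr do rewrite omegaE.
by rewrite omegaE sum_counts invf_div mulrA divfK.
Qed.

Lemma H_ins1E (R : realType) q n (y : (n + 1).-tuple 'I_q) : (0 < q)%N ->
  H_ins R y = log2 (n + 1)%:R
    - (n + 1)%:R^-1 * \sum_(r <- rl_profile y) (r%:R * log2 (r%:R : R)).
Proof.
move=> q_gt0.
have N_gt0 : 0 < (n + 1)%:R :> R by rewrite ltr0n addn1.
pose phi (c : nat) : R := - ((n + 1)%:R^-1 * log2 (c%:R / (n + 1)%:R)).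
have entE (c : nat) : ent_term (c%:R / (n + 1)%:R) = c%:R * phi c.
  rewrite /ent_term mulf_eq0 invr_eq0 (negbTE (lt0r_neq0 N_gt0)) orbF pnatr_eq0.
  by case: eqP => [->|_]; rewrite ?mul0r // /phi mulrN [in RHS]mulrA.
have runE (r : nat) : phi r *+ r =
    (n + 1)%:R^-1 * (r%:R * log2 (n + 1)%:R) - (n + 1)%:R^-1 * (r%:R * log2 r%:R).
  rewrite -[LHS]mulr_natl /phi; have [->|r_neq0] := eqVneq r 0%N.
    by rewrite !mul0r mulr0 subr0.
  have r_gt0 : 0 < r%:R :> R by rewrite ltr0n lt0n.
  by rewrite /log2 ln_div ?posrE //; ring.
rewrite /H_ins; under eq_bigr do rewrite posterior1E // entE.
rewrite (sum_count_mem_tuple (fun d => phi (count_mem d (deletions y)))); last first.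
  by apply: all_size_deletions; rewrite size_tuple addn1.
rewrite big_deletion_counts; under eq_bigr do rewrite runE.
rewrite sumrB -!mulr_sumr -mulr_suml -natr_sum -sumnE sumn_rl_profile size_tuple.
by rewrite mulrA mulVf ?mul1r // lt0r_neq0.
Qed.

Theorem theorem2 (R : realType) (q n : nat) (hq : (2 <= q)%N) (hn : (1 <= n)%N)
    (y : (n + 1).-tuple 'I_q) :
  (forall y' : (n + 1).-tuple 'I_q,
      perm_eq (rl_profile y) (rl_profile y') ->
      H_ins R y' = H_ins R y) /\
  H_ins R y =
    log2 (n + 1)%:R
    - (n + 1)%:R^-1 * \sum_(r <- rl_profile y) (r%:R * log2 (r%:R : R)).
Proof.
have q_gt0 : (0 < q)%N by exact: ltnW.
split; last exact: H_ins1E.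
by move=> y' perm_y; rewrite !H_ins1E // (perm_big _ perm_y).
Qed.
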